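(* Consider the generalized one-way trading problem (GOT) with capacity $C>0$ and bounds $0<L\le U$, $\theta:=U/L$, under Assumption A. Let $\alpha^*:=1+\ln\theta$, $\beta^*:=C/\alpha^*$, and define the threshold function $$\phi^*(w)=\begin{cases} L & w\in[0,\beta^* ),\\ L\,e^{(1+\ln\theta)w/C-1} & w\in[\beta^*,C],\\ +\infty & w>C.\end{cases}$$ Then the online threshold-based algorithm $\mathsf{OTA}_{\phi^*}$ for GOT has competitive ratio $1+\ln\theta$.
   Context: GOT: a single knapsack of capacity $C$; items $n=1,\dots,N$ arrive one at a time. Item $n$ has a size $D_n>0$ and a value function $g_n:[0,D_n]\to\mathbb{R}_{\ge0}$, revealed on arrival. The offline problem is $\max\sum_n g_n(y_n)$ subject to $\sum_n y_n\le C$, $0\le y_n\le D_n$. Assumption A: each $g_n$ is non-decreasing, differentiable and concave, $g_n(0)=0$, and $L\le g_n'\le U$ on $[0,D_n]$, where $L,U$ (and $C$) are known in advance. An online algorithm irrevocably chooses $y_n$ upon arrival of item $n$ using only items $1,\dots,n$ and $C,L,U$, keeping the constraints feasible. Its competitive ratio is $\sup_{\mathcal I}\mathrm{OPT}(\mathcal I)/\mathrm{ALG}(\mathcal I)$ over all instances satisfying Assumption A, where OPT is the offline optimum and ALG the value obtained by the algorithm; it is $\alpha$-competitive if this is at most $\alpha$. A threshold function is a non-decreasing $\phi:[0,C]\to\mathbb{R}$, extended by $\phi(w)=+\infty$ for $w>C$. $\mathsf{OTA}_\phi$: start with utilization $w^{(1)}=0$; upon arrival of item $n$ choose $y_n^*\in\arg\max_{0\le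 y\le D_n}\, g_n(y)-\int_{w^{(n)}}^{w^{(n)}+y}\phi(u)\,du$ and set $w^{(n+1)}=w^{(n)}+y_n^*$. *)

From Stdlib Require Import Reals Lra.
From Coquelicot Require Import Coquelicot.
Open Scope R_scope.

Fixpoint psum (y : nat -> R) (n : nat) : R :=
  match n with O => 0 | S m => psum y m + y m end.

(* Assumption A for one item of size D with value function g (only the
   values of g on [0,D] matter). *)
Definition valfun_ok (L U D : R) (g : R -> R) : Prop :=
  0 < D /\
  g 0 = 0 /\
  (forall x y, 0 <= x <= D -> 0 <= y <= D -> x <= y -> g x <= g y) /\
  (forall x y t, 0 <= x <= D -> 0 <= y <= D -> 0 <= t <= 1 ->
      t * g x + (1 - t) * g y <= g (t * x + (1 - t) * y)) /\
  (exists dg : R -> R, forall x, 0 <= x <= D ->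
      derivable_pt_lim g x (dg x) /\ L <= dg x <= U).

Definition instance_ok (L U : R) (N : nat) (D : nat -> R) (g : nat -> R -> R)
  : Prop := forall n, (n < N)%nat -> valfun_ok L U (D n) (g n).

Definition offline_feasible (C : R) (N : nat) (D : nat -> R) (y : nat -> R)
  : Prop := (forall n, (n < N)%nat -> 0 <= y n <= D n) /\ psum y N <= C.

Definition value (N : nat) (g : nat -> R -> R) (y : nat -> R) : R :=
  psum (fun n => g n (y n)) N.

(* Pseudo-utility objective of OTA_phi for item n at utilization w:
   g(y) - int_w^{w+y} phi.  Choices with w + y > C have objective -oo
   (phi = +oo beyond C) and are excluded explicitly below. *)
Definition ota_obj (phi : R -> R) (gn : R -> R) (w y : R) : R :=
  gn y - RInt phi w (w + y).

Definition OTA_run (phi : R -> R) (C : R) (N : nat) (D : nat -> R)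
  (g : nat -> R -> R) (y : nat -> R) : Prop :=
  forall n, (n < N)%nat ->
    let w := psum y n in
    0 <= y n <= D n /\ w + y n <= C /\
    (forall y', 0 <= y' <= D n -> w + y' <= C ->
       ota_obj phi (g n) w y' <= ota_obj phi (g n) w (y n) /\
       (ota_obj phi (g n) w y' = ota_obj phi (g n) w (y n) -> y' <= y n)).

Definition alpha_star (L U : R) : R := 1 + ln (U / L).
Definition beta_star (C L U : R) : R := C / alpha_star L U.

(* phi* on [0,C]; the value +oo for w > C is encoded by the constraint
   w + y <= C in OTA_run. *)
Definition phi_star (C L U : R) (w : R) : R :=
  if Rlt_dec w (beta_star C L U) then L
  else L * exp (alpha_star L U * w / C - 1).

(* Let W be the final utilization of OTA with threshold phi*. Taking y = 0 in each
   pseudo-utility maximization shows that every accepted amount is worth at least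
   its cost, so ALG >= int_0^W phi*. Optimality of each choice together with the
   concavity of g_n gives the supporting line g_n(z) <= g_n(y_n) + phi*(w_n + y_n)(z - y_n),
   so phi*(W) is a feasible dual price: OPT <= ALG - int_0^W phi* + C phi*(W). The
   exponential part of phi* is tuned so that int_0^W phi* = beta* phi*(W), i.e.
   C phi*(W) = (1 + ln theta) int_0^W phi*, whenever W >= beta*; when W < beta* the
   price L never stops OTA from taking whole items, so ALG >= OPT.
   For tightness, linear items whose slopes climb along phi* in small steps make ALG a
   Riemann sum of int_0^C phi* = beta* U, while OPT spends the whole capacity at slope U. *)

From Stdlib Require Import Reals Lra Lia.
From Coquelicot Require Import Coquelicot.
Open Scope R_scope.

Lemma psum_le (f h : nat -> R) (N : nat) :
  (forall n, (n < N)%nat -> f n <= h n) -> psum f N <= psum h N.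
Proof.
  induction N as [|N IH]; intros Hfh; simpl; [lra|].
  pose proof (IH (fun n hn => Hfh n ltac:(lia))). pose proof (Hfh N ltac:(lia)). lra.
Qed.

Lemma psum_plus (f h : nat -> R) (N : nat) :
  psum (fun n => f n + h n) N = psum f N + psum h N.
Proof. induction N as [|N IH]; simpl; [ring|rewrite IH; ring]. Qed.

Lemma psum_scal_l (c : R) (f : nat -> R) (N : nat) :
  psum (fun n => c * f n) N = c * psum f N.
Proof. induction N as [|N IH]; simpl; [ring|rewrite IH; ring]. Qed.

Lemma psum_eq0 (f : nat -> R) (N : nat) :
  (forall n, (n < N)%nat -> f n = 0) -> psum f N = 0.
Proof.
  induction N as [|N IH]; intros Hf; simpl; [reflexivity|].
  rewrite (IH (fun n hn => Hf n ltac:(lia))), (Hf N ltac:(lia)). ring.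
Qed.

Lemma psum_incr (f : nat -> R) (m N : nat) :
  (forall n, (n < N)%nat -> 0 <= f n) -> (m <= N)%nat -> psum f m <= psum f N.
Proof.
  induction N as [|N IH]; intros Hf Hm.
  - replace m with 0%nat by lia. lra.
  - destruct (Nat.eq_dec m (S N)) as [->|Hne]; [lra|]. simpl.
    pose proof (IH (fun n hn => Hf n ltac:(lia)) ltac:(lia)). pose proof (Hf N ltac:(lia)). lra.
Qed.

Lemma psum_nonneg (f : nat -> R) (N : nat) :
  (forall n, (n < N)%nat -> 0 <= f n) -> 0 <= psum f N.
Proof. intros Hf. exact (psum_incr f 0 N Hf ltac:(lia)). Qed.

Lemma valfun_increment (L U D : R) (g : R -> R) (x y : R) :
  valfun_ok L U D g -> 0 <= x <= y -> y <= D -> L * (y - x) <= g y - g x <= U * (y - x).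
Proof.
  intros (_ & _ & _ & _ & dg & Hdg) Hxy HyD.
  destruct (Req_dec x y) as [<-|Hne]; [lra|].
  destruct (MVT_cor2 g dg x y ltac:(lra)) as (c & -> & Hc).
  { intros c Hc. apply Hdg. lra. }
  destruct (Hdg c ltac:(lra)) as [_ Hbd].
  split; apply Rmult_le_compat_r; lra.
Qed.

Lemma valfun_nonneg (L U D : R) (g : R -> R) (z : R) :
  valfun_ok L U D g -> 0 <= z <= D -> 0 <= g z.
Proof. intros (HD & Hg0 & Hmono & _) Hz. rewrite <- Hg0. apply Hmono; lra. Qed.

Lemma value_nonneg (L U : R) (N : nat) (D : nat -> R) (g : nat -> R -> R) (y : nat -> R) :
  instance_ok L U N D g -> (forall n, (n < N)%nat -> 0 <= y n <= D n) -> 0 <= value N g y.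
Proof.
  intros Hinst Hy. apply psum_nonneg. intros n Hn.
  exact (valfun_nonneg _ _ _ _ _ (Hinst n Hn) (Hy n Hn)).
Qed.

Lemma linear_valfun_ok (L U D p : R) :
  0 <= L -> 0 < D -> L <= p <= U -> valfun_ok L U D (fun z => p * z).
Proof.
  intros HL HD Hp. repeat split.
  - exact HD.
  - ring.
  - intros x y _ _ Hxy. apply Rmult_le_compat_l; lra.
  - intros x y t _ _ _. apply Req_le. ring.
  - exists (fun _ => p). intros x _. split; [|lra].
    apply is_derive_Reals. auto_derive; [exact I|ring].
Qed.

Lemma Rle_of_forall_le_plus_mul (A B c : R) :
  0 <= c -> (forall t, 0 < t <= 1 -> A <= B + t * c) -> A <= B.
Proof.
  intros Hc Hsmall. apply Rle_plus_epsilon. intros eps Heps.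
  set (t := Rmin 1 (eps / (c + 1))).
  assert (Ht : 0 < t <= 1).
  { split; [apply Rmin_glb_lt; [lra|apply Rdiv_lt_0_compat; lra]|apply Rmin_l]. }
  assert (Htc : t * c <= eps).
  { assert (t * (c + 1) <= eps).
    { apply (Rle_trans _ (eps / (c + 1) * (c + 1))).
      - apply Rmult_le_compat_r; [lra|apply Rmin_r].
      - right. field. lra. }
    nra. }
  pose proof (Hsmall t Ht). lra.
Qed.

Lemma concave_supporting_line (g : R -> R) (D ys z lam K : R) :
  (forall x y t, 0 <= x <= D -> 0 <= y <= D -> 0 <= t <= 1 ->
     t * g x + (1 - t) * g y <= g (t * x + (1 - t) * y)) ->
  0 <= K -> 0 <= ys <= D -> 0 <= z <= D ->
  (forall y, 0 <= y <= D -> g y - g ys <= lam * (y - ys) + K * (y - ys) ^ 2) ->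
  g z - g ys <= lam * (z - ys).
Proof.
  intros Hconc HK Hys Hz Hquad.
  apply (Rle_of_forall_le_plus_mul _ _ (K * (z - ys) ^ 2)).
  { apply Rmult_le_pos; [exact HK|apply pow2_ge_0]. }
  intros t Ht.
  pose proof (Hconc z ys t Hz Hys ltac:(lra)) as Hchord.
  set (yt := t * z + (1 - t) * ys) in Hchord.
  assert (Hyt : 0 <= yt <= D).
  { unfold yt. assert (t * z <= t * D) by (apply Rmult_le_compat_l; lra).
    assert ((1 - t) * ys <= (1 - t) * D) by (apply Rmult_le_compat_l; lra).
    split; nra. }
  pose proof (Hquad yt Hyt) as Hq.
  replace (yt - ys) with (t * (z - ys)) in Hq by (unfold yt; ring).
  apply (Rmult_le_reg_l t); [lra|]. nra.
Qed.

Section MonotoneThreshold.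

Variable phi : R -> R.
Hypothesis phi_cont : forall x, continuous phi x.
Hypothesis phi_mono : forall x y, x <= y -> phi x <= phi y.

Lemma ex_RInt_threshold (x y : R) : ex_RInt phi x y.
Proof. apply (@ex_RInt_continuous R_CompleteNormedModule). intros z _. apply phi_cont. Qed.

Lemma RInt_threshold_Chasles (x y z : R) :
  RInt phi x y + RInt phi y z = RInt phi x z.
Proof. apply (RInt_Chasles phi); apply ex_RInt_threshold. Qed.

Lemma RInt_threshold_ge (x y : R) : x <= y -> (y - x) * phi x <= RInt phi x y.
Proof.
  intros Hxy. rewrite <- (RInt_const x y (phi x) : RInt _ x y = (y - x) * phi x).
  apply RInt_le; [exact Hxy|apply ex_RInt_const|apply ex_RInt_threshold|].
  intros t Ht. apply phi_mono. lra.
Qed.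

Lemma RInt_threshold_le (x y : R) : x <= y -> RInt phi x y <= (y - x) * phi y.
Proof.
  intros Hxy. rewrite <- (RInt_const x y (phi y) : RInt _ x y = (y - x) * phi y).
  apply RInt_le; [exact Hxy|apply ex_RInt_threshold|apply ex_RInt_const|].
  intros t Ht. apply phi_mono. lra.
Qed.

Lemma RInt_threshold_gt (x y : R) :
  x < y -> (forall t, x < t -> phi x < phi t) -> (y - x) * phi x < RInt phi x y.
Proof.
  intros Hxy Hstrict. rewrite <- (RInt_const x y (phi x) : RInt _ x y = (y - x) * phi x).
  apply RInt_lt; [exact Hxy|intros; apply phi_cont|intros; apply continuous_const|].
  intros t Ht. apply Hstrict. lra.
Qed.

Lemma RInt_threshold_lipschitz (C K u v : R) :
  (forall x y, x <= y <= C -> phi y - phi x <= K * (y - x)) -> u <= C -> v <= C ->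
  RInt phi u v <= phi u * (v - u) + K * (v - u) ^ 2.
Proof.
  intros Hlip Hu Hv. destruct (Rle_dec u v) as [Huv|Hvu].
  - pose proof (RInt_threshold_le u v Huv). pose proof (Hlip u v ltac:(lra)).
    assert ((v - u) * phi v <= (v - u) * (phi u + K * (v - u))) by (apply Rmult_le_compat_l; lra).
    nra.
  - assert (Hswap : RInt phi u v = - RInt phi v u).
    { rewrite <- (opp_RInt_swap phi v u) by apply ex_RInt_threshold. reflexivity. }
    pose proof (RInt_threshold_ge v u ltac:(lra)). pose proof (Hlip v u ltac:(lra)).
    assert ((u - v) * (phi u - K * (u - v)) <= (u - v) * phi v) by (apply Rmult_le_compat_l; lra).
    nra.
Qed.

Lemma RInt_threshold_psum (y : nat -> R) (N : nat) :
  RInt phi 0 (psum y N) = psum (fun n => RInt phi (psum y n) (psum y n + y n)) N.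
Proof.
  induction N as [|N IH]; simpl.
  - exact (RInt_point 0 phi).
  - rewrite <- IH. symmetry. apply RInt_threshold_Chasles.
Qed.

End MonotoneThreshold.

Definition ota_choice (phi : R -> R) (C D : R) (gn : R -> R) (w ys : R) : Prop :=
  0 <= ys <= D /\ w + ys <= C /\
  (forall y', 0 <= y' <= D -> w + y' <= C ->
     ota_obj phi gn w y' <= ota_obj phi gn w ys /\
     (ota_obj phi gn w y' = ota_obj phi gn w ys -> y' <= ys)).

Lemma OTA_run_choice (phi : R -> R) (C : R) (N : nat) (D : nat -> R)
    (g : nat -> R -> R) (y : nat -> R) :
  OTA_run phi C N D g y <->
  forall n, (n < N)%nat -> ota_choice phi C (D n) (g n) (psum y n) (y n).
Proof. reflexivity. Qed.

Lemma OTA_run_bounds (phi : R -> R) (C : R) (N : nat) (D : nat -> R)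
    (g : nat -> R -> R) (y : nat -> R) (n : nat) :
  OTA_run phi C N D g y -> (n < N)%nat ->
  0 <= y n <= D n /\ 0 <= psum y n /\ psum y n + y n <= psum y N <= C.
Proof.
  intros Hrun Hn.
  assert (Hy : forall k, (k < N)%nat -> 0 <= y k)
    by (intros k Hk; destruct (Hrun k Hk) as ((Hy0 & _) & _); exact Hy0).
  split; [apply (Hrun n Hn)|split; [apply psum_nonneg; intros k Hk; apply Hy; lia|split]].
  - exact (psum_incr y (S n) N Hy Hn).
  - destruct N as [|M]; [lia|]. apply (Hrun M). lia.
Qed.

Section OnlineThreshold.

Variables (phi : R -> R) (C L U K : R).
Hypothesis phi_cont : forall x, continuous phi x.
Hypothesis phi_mono : forall x y, x <= y -> phi x <= phi y.
Hypothesis phi_lip : forall x y, x <= y <= C -> phi y - phi x <= K * (y - x).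
Hypothesis K_ge0 : 0 <= K.
Hypothesis U_le_phi_C : U <= phi C.

Lemma ota_choice_RInt_le (D : R) (g : R -> R) (w ys : R) :
  valfun_ok L U D g -> ota_choice phi C D g w ys -> RInt phi w (w + ys) <= g ys.
Proof.
  intros (HD & Hg0 & _) (Hys & HwC & Hopt).
  destruct (Hopt 0 ltac:(lra) ltac:(lra)) as [Hle _].
  unfold ota_obj in Hle. rewrite Rplus_0_r, RInt_point, Hg0 in Hle.
  change (0 - 0 <= g ys - RInt phi w (w + ys)) in Hle. lra.
Qed.

Lemma ota_choice_quadratic (D : R) (g : R -> R) (w ys y : R) :
  valfun_ok L U D g -> ota_choice phi C D g w ys -> 0 <= y <= D ->
  g y - g ys <= phi (w + ys) * (y - ys) + K * (y - ys) ^ 2.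
Proof.
  intros Hg (Hys & HwC & Hopt) Hy. destruct (Rle_dec (w + y) C) as [HyC|HyC].
  - destruct (Hopt y Hy HyC) as [Hle _]. unfold ota_obj in Hle.
    pose proof (RInt_threshold_Chasles phi phi_cont w (w + ys) (w + y)).
    pose proof (RInt_threshold_lipschitz phi phi_cont phi_mono C K (w + ys) (w + y)
                  phi_lip HwC HyC).
    replace (w + y - (w + ys)) with (y - ys) in * by ring.
    lra.
  - (* beyond capacity only the slope bound [g' <= U <= phi C] is available *)
    pose proof (valfun_increment L U D g ys y Hg ltac:(lra) ltac:(lra)) as [_ Hinc].
    pose proof (phi_lip (w + ys) C ltac:(lra)).
    assert (U * (y - ys) <= (phi (w + ys) + K * (y - ys)) * (y - ys)).
    { apply Rmult_le_compat_r; [lra|].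
      assert (K * (C - (w + ys)) <= K * (y - ys)) by (apply Rmult_le_compat_l; lra).
      lra. }
    nra.
Qed.

Lemma ota_choice_supporting_line (D : R) (g : R -> R) (w ys z : R) :
  valfun_ok L U D g -> ota_choice phi C D g w ys -> 0 <= z <= D ->
  g z - g ys <= phi (w + ys) * (z - ys).
Proof.
  intros Hg Hch Hz. pose proof Hg as (_ & _ & _ & Hconc & _).
  apply (concave_supporting_line g D ys z _ K Hconc K_ge0 (proj1 Hch) Hz).
  intros y Hy. exact (ota_choice_quadratic D g w ys y Hg Hch Hy).
Qed.

Lemma ota_choice_saturates (D : R) (g : R -> R) (w ys y' : R) :
  valfun_ok L U D g -> ota_choice phi C D g w ys ->
  ys <= y' <= D -> w + y' <= C -> phi (w + y') <= L -> y' <= ys.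
Proof.
  intros Hg (Hys & HwC & Hopt) Hy' Hy'C HflatL.
  destruct (Hopt y' ltac:(lra) Hy'C) as [Hle Htie]. apply Htie. unfold ota_obj in *.
  pose proof (valfun_increment L U D g ys y' Hg ltac:(lra) ltac:(lra)) as [Hinc _].
  pose proof (RInt_threshold_Chasles phi phi_cont w (w + ys) (w + y')).
  pose proof (RInt_threshold_le phi phi_cont phi_mono (w + ys) (w + y') ltac:(lra)).
  replace (w + y' - (w + ys)) with (y' - ys) in * by ring.
  assert ((y' - ys) * phi (w + y') <= (y' - ys) * L) by (apply Rmult_le_compat_l; lra).
  lra.
Qed.

Lemma ota_choice_linear (D w ys : R) :
  0 <= ys <= D -> w + ys <= C -> (forall t, w + ys < t -> phi (w + ys) < phi t) ->
  ota_choice phi C D (fun z => phi (w + ys) * z) w ys.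
Proof.
  intros Hys HwC Hstrict. split; [exact Hys|split; [exact HwC|]].
  intros y' Hy' Hy'C. unfold ota_obj.
  pose proof (RInt_threshold_Chasles phi phi_cont w (w + ys) (w + y')) as Hchasles.
  destruct (Rle_dec y' ys) as [Hle|Hgt].
  - pose proof (RInt_threshold_Chasles phi phi_cont w (w + y') (w + ys)).
    pose proof (RInt_threshold_le phi phi_cont phi_mono (w + y') (w + ys) ltac:(lra)).
    replace (w + ys - (w + y')) with (ys - y') in * by ring.
    split; [lra|intros _; exact Hle].
  - pose proof (RInt_threshold_gt phi phi_cont (w + ys) (w + y') ltac:(lra) Hstrict).
    replace (w + y' - (w + ys)) with (y' - ys) in * by ring.
    split; intros; lra.
Qed.

Section Run.

Variables (N : nat) (D : nat -> R) (g : nat -> R -> R) (y : nat -> R).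
Hypothesis Hinst : instance_ok L U N D g.
Hypothesis Hrun : OTA_run phi C N D g y.

Lemma OTA_run_RInt_le_value : RInt phi 0 (psum y N) <= value N g y.
Proof.
  rewrite (RInt_threshold_psum phi phi_cont). apply psum_le. intros n Hn.
  exact (ota_choice_RInt_le (D n) (g n) (psum y n) (y n) (Hinst n Hn) (Hrun n Hn)).
Qed.

(* Weak duality, with the price [phi W] at the final utilization [W] as dual variable. *)
Lemma OTA_run_opt_le (yopt : nat -> R) :
  offline_feasible C N D yopt -> 0 <= phi (psum y N) ->
  value N g yopt <= value N g y - RInt phi 0 (psum y N) + phi (psum y N) * C.
Proof.
  intros [Hopt HoptC] Hprice. set (W := psum y N).
  assert (Hitem : forall n, (n < N)%nat ->
    g n (yopt n) + phi (psum y n + y n) * y n <= g n (y n) + phi W * yopt n).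
  { intros n Hn. destruct (OTA_run_bounds phi C N D g y n Hrun Hn) as (_ & _ & HW & _).
    pose proof (ota_choice_supporting_line (D n) (g n) (psum y n) (y n) (yopt n)
                  (Hinst n Hn) (Hrun n Hn) (Hopt n Hn)).
    assert (phi (psum y n + y n) * yopt n <= phi W * yopt n)
      by (apply Rmult_le_compat_r; [apply Hopt, Hn|apply phi_mono, HW]).
    lra. }
  pose proof (psum_le _ _ N Hitem) as Hsum.
  rewrite !psum_plus, psum_scal_l in Hsum.
  assert (Hprices : RInt phi 0 W <= psum (fun n => phi (psum y n + y n) * y n) N).
  { unfold W. rewrite (RInt_threshold_psum phi phi_cont). apply psum_le. intros n Hn.
    destruct (OTA_run_bounds phi C N D g y n Hrun Hn) as ((Hyn & _) & _).
    pose proof (RInt_threshold_le phi phi_cont phi_mono (psum y n) (psum y n + y n) ltac:(lra)).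
    replace (psum y n + y n - psum y n) with (y n) in * by ring. lra. }
  assert (phi W * psum yopt N <= phi W * C) by (apply Rmult_le_compat_l; assumption).
  unfold value. lra.
Qed.

End Run.

End OnlineThreshold.

Lemma exp_sub_le (u v : R) : exp v - exp u <= exp v * (v - u).
Proof.
  assert (Hu : exp u = exp v * exp (u - v)) by (rewrite <- exp_plus; f_equal; ring).
  pose proof (exp_ineq1_le (u - v)). pose proof (exp_pos v).
  rewrite Hu. nra.
Qed.

Lemma exp_le_compat (u v : R) : u <= v -> exp u <= exp v.
Proof. intros [Hlt|<-]; [apply Rlt_le, exp_increasing, Hlt|apply Rle_refl]. Qed.

Section PhiStar.

Variables (C L U : R).
Hypotheses (hC : 0 < C) (hL : 0 < L) (hLU : L <= U).

Local Notation alpha := (alpha_star L U).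
Local Notation beta := (beta_star C L U).
Local Notation phi := (phi_star C L U).

Lemma alpha_star_ge1 : 1 <= alpha.
Proof.
  unfold alpha_star. assert (1 <= U / L) by (apply Rcomplements.Rle_div_r; lra).
  pose proof (ln_le 1 (U / L) ltac:(lra) H). rewrite ln_1 in *. lra.
Qed.

Lemma exp_alpha_star : L * exp (alpha - 1) = U.
Proof.
  unfold alpha_star. replace (1 + ln (U / L) - 1) with (ln (U / L)) by ring.
  rewrite exp_ln by (apply Rdiv_lt_0_compat; lra). field. lra.
Qed.

Lemma alpha_beta_star : alpha * beta = C.
Proof. pose proof alpha_star_ge1. unfold beta_star. field. lra. Qed.

Lemma beta_star_pos : 0 < beta.
Proof. pose proof alpha_star_ge1. unfold beta_star. apply Rdiv_lt_0_compat; lra. Qed.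

Lemma beta_star_le : beta <= C.
Proof. pose proof alpha_star_ge1. pose proof beta_star_pos. pose proof alpha_beta_star. nra. Qed.

Lemma phi_star_exponent (x : R) : alpha * x / C - 1 = alpha / C * (x - beta).
Proof. pose proof alpha_star_ge1. unfold beta_star. field. split; lra. Qed.

Lemma phi_star_flat (x : R) : x <= beta -> phi x = L.
Proof.
  intros Hx. unfold phi_star. destruct (Rlt_dec x beta) as [_|Hge]; [reflexivity|].
  replace x with beta by lra. rewrite phi_star_exponent, Rminus_diag, Rmult_0_r, exp_0. ring.
Qed.

Lemma phi_star_exp (x : R) : beta <= x -> phi x = L * exp (alpha * x / C - 1).
Proof. intros Hx. unfold phi_star. destruct (Rlt_dec x beta); [lra|reflexivity]. Qed.

Lemma phi_star_Rmax (x : R) : phi x = L * exp (Rmax 0 (alpha * x / C - 1)).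
Proof.
  pose proof alpha_star_ge1.
  assert (Hsign : 0 <= alpha / C) by (apply Rlt_le, Rdiv_lt_0_compat; lra).
  rewrite phi_star_exponent. destruct (Rle_dec x beta) as [Hx|Hx].
  - rewrite phi_star_flat, Rmax_left, exp_0 by nra. ring.
  - rewrite phi_star_exp, phi_star_exponent, Rmax_right by nra. reflexivity.
Qed.

Lemma phi_star_ge (x : R) : L <= phi x.
Proof.
  rewrite phi_star_Rmax. pose proof (exp_ineq1_le (Rmax 0 (alpha * x / C - 1))).
  pose proof (Rmax_l 0 (alpha * x / C - 1)). nra.
Qed.

Lemma phi_star_C : phi C = U.
Proof.
  rewrite phi_star_exp by apply beta_star_le.
  transitivity (L * exp (alpha - 1)); [|exact exp_alpha_star].
  do 2 f_equal. field. lra.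
Qed.

Lemma phi_star_le (x y : R) : x <= y -> phi x <= phi y.
Proof.
  intros Hxy. rewrite !phi_star_Rmax. apply Rmult_le_compat_l; [lra|].
  apply exp_le_compat, Rle_max_compat_l.
  pose proof alpha_star_ge1. unfold Rdiv. apply Rplus_le_compat_r, Rmult_le_compat_r.
  - apply Rlt_le, Rinv_0_lt_compat, hC.
  - apply Rmult_le_compat_l; lra.
Qed.

Lemma phi_star_lt (x y : R) : beta <= x -> x < y -> phi x < phi y.
Proof.
  intros Hx Hxy. rewrite !phi_star_exp by lra. apply Rmult_lt_compat_l; [exact hL|].
  apply exp_increasing. rewrite !phi_star_exponent.
  pose proof alpha_star_ge1. apply Rmult_lt_compat_l; [apply Rdiv_lt_0_compat|]; lra.
Qed.

Lemma phi_star_continuous (x : R) : continuous phi x.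
Proof.
  set (e := fun z => alpha * z / C - 1).
  apply (continuous_ext (fun z => L * exp ((e z + Rabs (e z)) / 2))).
  { intros z. rewrite phi_star_Rmax. fold (e z). do 2 f_equal.
    unfold Rmax. destruct (Rle_dec 0 (e z)); [rewrite Rabs_right|rewrite Rabs_left]; lra. }
  apply (continuous_mult (fun _ => L)); [apply continuous_const|].
  apply (continuous_comp _ exp); [|apply continuous_exp].
  assert (He : continuous e x).
  { apply (ex_derive_continuous e). unfold e. auto_derive. exact I. }
  apply (continuous_mult _ (fun _ => / 2)); [|apply continuous_const].
  apply (continuous_plus e); [exact He|apply continuous_Rabs_comp, He].
Qed.

Lemma phi_star_lipschitz (x y : R) :
  x <= y <= C -> phi y - phi x <= U * alpha / C * (y - x).
Proof.
  intros Hxy. pose proof alpha_star_ge1.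
  set (ex := Rmax 0 (alpha * x / C - 1)). set (ey := Rmax 0 (alpha * y / C - 1)).
  assert (Hstep : 0 <= alpha * y / C - alpha * x / C <= alpha / C * (y - x)).
  { replace (alpha * y / C - alpha * x / C) with (alpha / C * (y - x)) by (field; lra).
    split; [|lra]. apply Rmult_le_pos; [apply Rlt_le, Rdiv_lt_0_compat|]; lra. }
  assert (Hgap : 0 <= ey - ex <= alpha / C * (y - x)).
  { unfold ex, ey, Rmax.
    destruct (Rle_dec 0 (alpha * x / C - 1)), (Rle_dec 0 (alpha * y / C - 1)); lra. }
  assert (Hy : phi y <= phi C) by (apply phi_star_le; lra). rewrite phi_star_C in Hy.
  pose proof (exp_sub_le ex ey).
  assert (Hphi : phi y - phi x <= phi y * (ey - ex)).
  { rewrite !phi_star_Rmax. fold ex ey.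
    replace (L * exp ey - L * exp ex) with (L * (exp ey - exp ex)) by ring.
    rewrite Rmult_assoc. apply Rmult_le_compat_l; lra. }
  pose proof (phi_star_ge y).
  assert (phi y * (ey - ex) <= U * (alpha / C * (y - x))) by (apply Rmult_le_compat; lra).
  replace (U * alpha / C * (y - x)) with (U * (alpha / C * (y - x))) by (field; lra).
  lra.
Qed.

Lemma RInt_phi_star (W : R) : beta <= W -> RInt phi 0 W = beta * phi W.
Proof.
  intros HW. pose proof beta_star_pos. pose proof alpha_beta_star. pose proof alpha_star_ge1.
  set (psi := fun z => L * exp (alpha * z / C - 1)).
  rewrite <- (RInt_threshold_Chasles phi phi_star_continuous 0 beta W).
  rewrite (RInt_ext phi (fun _ => L) 0 beta).
  2:{ intros z Hz. rewrite Rmin_left, Rmax_right in Hz by lra. apply phi_star_flat. lra. }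
  rewrite (RInt_ext phi psi beta W).
  2:{ intros z Hz. rewrite Rmin_left, Rmax_right in Hz by lra. apply phi_star_exp. lra. }
  assert (Hpsi : is_RInt psi beta W (minus (beta * psi W) (beta * psi beta))).
  { apply (is_RInt_derive (fun z => beta * psi z)).
    - intros z _. unfold psi. auto_derive; [exact I|].
      replace (alpha * z * / C + - (1)) with (alpha * z / C - 1) by (unfold Rdiv; ring).
      transitivity (alpha * beta / C * (L * exp (alpha * z / C - 1))); [unfold Rdiv; ring|].
      rewrite H0. field. lra.
    - intros z _. apply (ex_derive_continuous psi). unfold psi. auto_derive. exact I. }
  assert (Hpsi_beta : psi beta = L).
  { unfold psi. rewrite phi_star_exponent, Rminus_diag, Rmult_0_r, exp_0. ring. }
  rewrite (is_RInt_unique _ _ _ _ Hpsi), RInt_const, Hpsi_beta, (phi_star_exp W HW).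
  fold (psi W). unfold minus, plus, opp, scal; simpl. unfold mult; simpl. ring.
Qed.

Lemma phi_star_lipschitz_const_nonneg : 0 <= U * alpha / C.
Proof.
  pose proof alpha_star_ge1.
  apply Rmult_le_pos; [apply Rmult_le_pos|apply Rlt_le, Rinv_0_lt_compat]; lra.
Qed.

Lemma ota_choice_phi_star_accepts_all (D : R) (g : R -> R) (w ys : R) :
  valfun_ok L U D g -> ota_choice phi C D g w ys -> w + ys < beta -> ys = D.
Proof.
  intros Hg Hch Hflat. pose proof Hch as ((Hys & HysD) & _).
  pose proof beta_star_le.
  set (y' := Rmin D (beta - w)).
  assert (Hy' : ys <= y' <= D) by (split; [apply Rmin_glb|apply Rmin_l]; lra).
  assert (Hy'beta : w + y' <= beta) by (pose proof (Rmin_r D (beta - w)); unfold y'; lra).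
  assert (Hsat : y' <= ys).
  { apply (ota_choice_saturates phi C L U phi_star_continuous phi_star_le D g w ys y');
      [exact Hg|exact Hch|exact Hy'|lra|].
    rewrite phi_star_flat by exact Hy'beta. lra. }
  unfold y', Rmin in Hsat. destruct (Rle_dec D (beta - w)); lra.
Qed.

Lemma OTA_phi_star_competitive (N : nat) (D : nat -> R) (g : nat -> R -> R)
    (y yopt : nat -> R) :
  instance_ok L U N D g -> OTA_run phi C N D g y -> offline_feasible C N D yopt ->
  value N g yopt <= alpha * value N g y.
Proof.
  intros Hinst Hrun Hfeas. pose proof alpha_star_ge1.
  assert (HALG : 0 <= value N g y).
  { apply (value_nonneg L U N D g y Hinst). intros n Hn.
    apply (OTA_run_bounds phi C N D g y n Hrun Hn). }
  destruct (Rlt_le_dec (psum y N) beta) as [Hlow|Hhigh].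
  - assert (value N g yopt <= value N g y); [|nra].
    apply psum_le. intros n Hn. destruct Hfeas as [Hopt _].
    destruct (OTA_run_bounds phi C N D g y n Hrun Hn) as (_ & _ & HW & _).
    rewrite (ota_choice_phi_star_accepts_all (D n) (g n) (psum y n) (y n) (Hinst n Hn) (Hrun n Hn))
      by lra.
    destruct (Hinst n Hn) as (_ & _ & Hmono & _). pose proof (Hopt n Hn). apply Hmono; lra.
  - pose proof (OTA_run_opt_le phi C L U (U * alpha / C) phi_star_continuous phi_star_le
                  phi_star_lipschitz phi_star_lipschitz_const_nonneg
                  (Req_le _ _ (eq_sym phi_star_C)) N D g y Hinst Hrun yopt Hfeas
                  ltac:(pose proof (phi_star_ge (psum y N)); lra)).
    pose proof (OTA_run_RInt_le_value phi C L U phi_star_continuous N D g y Hinst Hrun).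
    rewrite (RInt_phi_star _ Hhigh) in *.
    assert (phi (psum y N) * C = alpha * (beta * phi (psum y N)))
      by (rewrite <- Rmult_assoc, alpha_beta_star; ring).
    assert (0 <= (alpha - 1) * (value N g y - beta * phi (psum y N)))
      by (apply Rmult_le_pos; lra).
    nra.
Qed.

Lemma OTA_phi_star_staircase (m : nat) :
  exists (N : nat) (D : nat -> R) (g : nat -> R -> R) (y yopt : nat -> R),
    instance_ok L U N D g /\ OTA_run phi C N D g y /\ offline_feasible C N D yopt /\
    value N g yopt = U * C /\
    value N g y <= beta * U + (C - beta) / INR (S m) * (U - L).
Proof.
  (* Item 0 (slope L) fills [0, beta]; item k >= 1 has slope phi (x k) and OTA takes
     exactly delta of it, so ALG is a right Riemann sum of phi over [beta, C]. OPT puts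
     the whole capacity on the last item, whose slope is phi C = U. *)
  pose proof beta_star_pos. pose proof beta_star_le.
  set (n := S m). set (delta := (C - beta) / INR n).
  assert (Hn : 0 < INR n) by (apply lt_0_INR; unfold n; lia).
  assert (Hdelta : 0 <= delta) by (apply Rmult_le_pos; [lra|apply Rlt_le, Rinv_0_lt_compat, Hn]).
  set (x := fun k => beta + INR k * delta).
  assert (Hx : forall k, (k <= n)%nat -> beta <= x k <= C).
  { intros k Hk. apply le_INR in Hk. pose proof (pos_INR k). unfold x. split; [nra|].
    assert (INR n * delta = C - beta) by (unfold delta; field; lra). nra. }
  assert (Hxn : x n = C) by (unfold x, delta; field; lra).
  set (g := fun k z => phi (x k) * z).
  set (y := fun k => match k with O => beta | S _ => delta end).
  set (yopt := fun k => if Nat.eqb k n then C else 0).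
  assert (Hy : forall k, 0 <= y k <= C).
  { intros [|k]; simpl; [lra|]. split; [lra|].
    pose proof (Hx 1%nat ltac:(unfold n; lia)). unfold x in *. simpl in *. lra. }
  assert (Hpsum : forall k, psum y (S k) = x k).
  { induction k as [|k IH]; [unfold x; simpl; lra|].
    change (psum y (S k) + delta = x (S k)). rewrite IH. unfold x. rewrite S_INR. ring. }
  assert (Hyopt0 : forall k, (k < n)%nat -> yopt k = 0).
  { intros k Hk. unfold yopt.
    replace (Nat.eqb k n) with false by (symmetry; apply Nat.eqb_neq; lia). reflexivity. }
  assert (Hyoptn : yopt n = C) by (unfold yopt; rewrite Nat.eqb_refl; reflexivity).
  exists (S n), (fun _ => C), g, y, yopt. split; [|split; [|split; [|split]]].
  - intros k Hk. apply linear_valfun_ok; [lra|lra|split; [apply phi_star_ge|]].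
    pose proof (phi_star_le (x k) C ltac:(apply Hx; lia)). rewrite phi_star_C in *. lra.
  - apply OTA_run_choice. intros k Hk.
    replace (g k) with (fun z => phi (psum y k + y k) * z)
      by (unfold g; rewrite <- Hpsum; reflexivity).
    pose proof (Hx k ltac:(lia)) as Hxk. rewrite <- Hpsum in Hxk. simpl in Hxk.
    apply (ota_choice_linear phi C phi_star_continuous phi_star_le); [apply Hy|lra|].
    intros t Ht. apply phi_star_lt; lra.
  - split; [intros k _; unfold yopt; destruct (Nat.eqb k n); lra|].
    change (psum yopt n + yopt n <= C). rewrite (psum_eq0 yopt n Hyopt0), Hyoptn. lra.
  - change (psum (fun k => g k (yopt k)) n + g n (yopt n) = U * C). rewrite psum_eq0.
    + unfold g. rewrite Hyoptn, Hxn, phi_star_C. ring.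
    + intros k Hk. unfold g. rewrite Hyopt0 by exact Hk. ring.
  - assert (Hstep : forall k, (k <= n)%nat ->
      psum (fun j => g j (y j)) (S k) <= RInt phi 0 (x k) + delta * (phi (x k) - L)).
    { induction k as [|k IH]; intros Hk.
      - assert (Hx0 : x 0%nat = beta) by (unfold x; simpl; ring).
        unfold g. simpl. rewrite Hx0, RInt_phi_star, phi_star_flat by lra. lra.
      - change (psum (fun j => g j (y j)) (S k) + phi (x (S k)) * delta
                <= RInt phi 0 (x (S k)) + delta * (phi (x (S k)) - L)).
        pose proof (IH ltac:(lia)).
        rewrite <- (RInt_threshold_Chasles phi phi_star_continuous 0 (x k) (x (S k))).
        assert (HxS : x (S k) = x k + delta) by (unfold x; rewrite S_INR; ring).
        pose proof (RInt_threshold_ge phi phi_star_continuous phi_star_le (x k) (x (S k))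
                      ltac:(lra)) as Hge.
        replace (x (S k) - x k) with delta in Hge by lra. lra. }
    unfold value. pose proof (Hstep n (le_n n)) as Hlast.
    rewrite Hxn, RInt_phi_star, phi_star_C in Hlast by lra. lra.
Qed.

Lemma OTA_phi_star_near_tight (eta : R) :
  0 < eta ->
  exists (N : nat) (D : nat -> R) (g : nat -> R -> R) (y yopt : nat -> R),
    instance_ok L U N D g /\ OTA_run phi C N D g y /\ offline_feasible C N D yopt /\
    value N g yopt = U * C /\ value N g y <= beta * U + eta.
Proof.
  intros Heta. pose proof beta_star_le.
  destruct (INR_unbounded ((C - beta) * (U - L) / eta)) as [m Hm].
  destruct (OTA_phi_star_staircase m)
    as (N & D & g & y & yopt & Hinst & Hrun & Hfeas & Hopt & Halg).
  exists N, D, g, y, yopt. do 4 (split; [assumption|]).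
  assert (Hgap : (C - beta) / INR (S m) * (U - L) <= eta); [|lra].
  rewrite S_INR. pose proof (pos_INR m).
  assert ((C - beta) * (U - L) <= eta * (INR m + 1)).
  { apply (Rmult_gt_compat_r eta) in Hm; [|exact Heta].
    replace ((C - beta) * (U - L) / eta * eta) with ((C - beta) * (U - L)) in Hm by (field; lra).
    nra. }
  apply (Rmult_le_reg_r (INR m + 1)); [lra|].
  replace ((C - beta) / (INR m + 1) * (U - L) * (INR m + 1)) with ((C - beta) * (U - L))
    by (field; lra).
  lra.
Qed.

Lemma OTA_phi_star_ratio_tight (eps : R) :
  0 < eps ->
  exists (N : nat) (D : nat -> R) (g : nat -> R -> R) (y yopt : nat -> R),
    instance_ok L U N D g /\ OTA_run phi C N D g y /\ offline_feasible C N D yopt /\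
    (alpha - eps) * value N g y < value N g yopt.
Proof.
  intros Heps. pose proof alpha_star_ge1. pose proof beta_star_pos. pose proof alpha_beta_star.
  set (eta := eps * beta * U / alpha).
  assert (Heta : 0 < eta).
  { assert (0 < U) by lra. apply Rdiv_lt_0_compat; [|lra].
    apply Rmult_lt_0_compat; [apply Rmult_lt_0_compat|]; assumption. }
  destruct (OTA_phi_star_near_tight eta Heta)
    as (N & D & g & y & yopt & Hinst & Hrun & Hfeas & Hopt & Halg).
  exists N, D, g, y, yopt. do 3 (split; [assumption|]).
  pose proof (value_nonneg L U N D g y Hinst
                (fun n Hn => proj1 (OTA_run_bounds _ _ N D g y n Hrun Hn))).
  assert (HUC : U * C = alpha * (beta * U)) by (rewrite <- Rmult_assoc, alpha_beta_star; ring).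
  rewrite Hopt. destruct (Rle_lt_dec (alpha - eps) 0) as [Hneg|Hpos].
  - assert (0 < beta * U) by (apply Rmult_lt_0_compat; lra). nra.
  - assert (Hshare : (alpha - eps) * eta < eps * beta * U).
    { replace ((alpha - eps) * eta) with (eps * beta * U - eps * eta) by (unfold eta; field; lra).
      assert (0 < eps * eta) by (apply Rmult_lt_0_compat; lra). lra. }
    assert ((alpha - eps) * value N g y <= (alpha - eps) * (beta * U + eta))
      by (apply Rmult_le_compat_l; lra).
    lra.
Qed.

End PhiStar.

Theorem theorem1 (C L U : R) (hC : 0 < C) (hL : 0 < L) (hLU : L <= U) :
  (* upper bound: OPT <= (1 + ln theta) * ALG on every instance *)
  (forall (N : nat) (D : nat -> R) (g : nat -> R -> R) (y yopt : nat -> R),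
      instance_ok L U N D g ->
      OTA_run (phi_star C L U) C N D g y ->
      offline_feasible C N D yopt ->
      value N g yopt <= alpha_star L U * value N g y) /\
  (* tightness: the supremum of OPT/ALG is not smaller than 1 + ln theta *)
  (forall eps : R, 0 < eps ->
    exists (N : nat) (D : nat -> R) (g : nat -> R -> R) (y yopt : nat -> R),
      instance_ok L U N D g /\
      OTA_run (phi_star C L U) C N D g y /\
      offline_feasible C N D yopt /\
      (alpha_star L U - eps) * value N g y < value N g yopt).
Proof.
  split.
  - exact (OTA_phi_star_competitive C L U hC hL hLU).
  - exact (OTA_phi_star_ratio_tight C L U hC hL hLU).
Qed.
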